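(* Let $\mathcal{U}$ be an age, let $\mathcal{C}\subseteq\mathcal{U}$ be a Fraïssé class whose Fraïssé limit is locally finite and has an oligomorphic automorphism group, let $\mathbf{T}\in\overline{\mathcal{U}}$, and let $u:\mathbf{V}\to\mathbf{T}$ be a universal homogeneous homomorphism to $\mathbf{T}$ within $\overline{\mathcal{C}}$. If $\operatorname{Aut}(\mathbf{T})$ is oligomorphic, then $\operatorname{Aut}(\mathbf{V})$ is oligomorphic.
   Context: An embedding is an injective homomorphism reflecting all relations. An age is a class of finitely generated structures of one signature with countably many isomorphism types, closed under finitely generated substructures (up to isomorphism) and with the joint embedding property; for an age $\mathcal{C}$, $\overline{\mathcal{C}}$ is the class of countable structures all of whose finitely generated substructures are isomorphic to members of $\mathcal{C}$. A Fraïssé class is an age with the amalgamation property, and its Fraïssé limit is the unique countable homogeneous structure (every isomorphism between finitely generated substructures extends to an automorphism) with that age. A structure is locally finite if all finitely generated substructures are finite. A permutation group on $\Omega$ is oligomorphic if for every $n\ge1$ its coordinatewise action on $\Omega^n$ has finitely many orbits. For $\mathbf{V}\in\overline{\mathcal{C}}$ and a countable $\mathbf{T}$, a homomorphism $u:\mathbf{V}\to\mathbf{T}$ is universal within $\overline{\mathcal{C}}$ if for every $\mathbf{A}\in\overline{\mathcal{C}}$ and homomorphism $h:\mathbf{A}\to\mathbf{T}$ there is an embedding $\iota:\mathbf{A}\hookrightarrow\mathbf{V}$ with $h=u\circ\iota$; homogeneous if for every finitely generated $\mathbf{A}\le\mathbf{V}$ and embedding $\iota:\mathbf{A}\hookrightarrow\mathbf{V}$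 with $u\circ\iota=u\restriction_A$ there is an automorphism $\alpha$ of $\mathbf{V}$ with $u\circ\alpha=u$ and $\alpha\restriction_A=\iota$. *)

From Stdlib Require Import List.
From mathcomp Require Import all_boot.
Set Implicit Arguments.
Unset Strict Implicit.
Unset Printing Implicit Defensive.

Record signature := Signature {
  fsym : Type; farity : fsym -> nat;
  rsym : Type; rarity : rsym -> nat }.

Record structure (L : signature) := Structure {
  carrier :> Type;
  fint : forall f : fsym L, ('I_(farity f) -> carrier) -> carrier;
  rint : forall r : rsym L, ('I_(rarity r) -> carrier) -> Prop }.

Section Structures.
Variable L : signature.
Implicit Types A B D F V T : structure L.

Definition is_hom A B (h : A -> B) : Prop :=
  (forall f (a : 'I_(farity f) -> A), h (fint a) = fint (fun i => h (a i))) /\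
  (forall r (a : 'I_(rarity r) -> A), rint a -> rint (fun i => h (a i))).

Definition is_emb A B (h : A -> B) : Prop :=
  injective h /\
  (forall f (a : 'I_(farity f) -> A), h (fint a) = fint (fun i => h (a i))) /\
  (forall r (a : 'I_(rarity r) -> A), rint a <-> rint (fun i => h (a i))).

Definition is_iso A B (h : A -> B) : Prop := is_emb h /\ forall y, exists x, h x = y.
Definition isomorphic A B : Prop := exists h : A -> B, is_iso h.
Definition is_aut A (h : A -> A) : Prop := is_iso h.

Definition closed A (S : A -> Prop) : Prop :=
  forall f (a : 'I_(farity f) -> A), (forall i, S (a i)) -> S (fint a).

Definition gen A (l : seq A) (x : A) : Prop :=
  forall S : A -> Prop, closed S -> (forall y, List.In y l -> S y) -> S x.

Lemma gen_closed A (l : seq A) : closed (gen l).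
Proof. intros f a Ha S HS Hl. apply HS => i. exact: (Ha i S HS Hl). Qed.

Definition sub_struct A (S : A -> Prop) (HS : closed S) : structure L :=
  @Structure L {x : A | S x}
    (fun f a => exist S (fint (fun i => proj1_sig (a i)))
                        (HS f _ (fun i => proj2_sig (a i))))
    (fun r a => rint (fun i => proj1_sig (a i))).

Definition fg_sub A (l : seq A) : structure L := @sub_struct A (gen l) (@gen_closed A l).

Definition fin_gen A : Prop := exists l : seq A, forall x, gen l x.
Definition countable_struct A : Prop := exists g : A -> nat, injective g.
Definition locally_finite A : Prop :=
  forall l : seq A, exists m : seq A, forall x, gen l x -> List.In x m.

Definition oligomorphic A : Prop :=
  forall n, 0 < n -> exists (N : nat) (reps : 'I_N -> 'I_n -> A),
    forall x : 'I_n -> A, exists (i : 'I_N) (al : A -> A),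
      is_aut al /\ forall j, al (reps i j) = x j.

Definition is_age (C : structure L -> Prop) : Prop :=
  (forall A, C A -> fin_gen A) /\
  (exists s : nat -> structure L, forall A, C A -> exists k, isomorphic A (s k)) /\
  (forall A (l : seq A), C A -> exists B, C B /\ isomorphic (fg_sub l) B) /\
  (forall A B, C A -> C B -> exists D, C D /\
     exists (f : A -> D) (g : B -> D), is_emb f /\ is_emb g).

Definition amalgamation (C : structure L -> Prop) : Prop :=
  forall A B1 B2 (f1 : A -> B1) (f2 : A -> B2), C A -> C B1 -> C B2 ->
    is_emb f1 -> is_emb f2 ->
    exists D, C D /\ exists (g1 : B1 -> D) (g2 : B2 -> D),
      is_emb g1 /\ is_emb g2 /\ forall x, g1 (f1 x) = g2 (f2 x).

Definition fraisse_class (C : structure L -> Prop) : Prop :=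
  is_age C /\ amalgamation C.

Definition cbar (C : structure L -> Prop) A : Prop :=
  countable_struct A /\
  forall l : seq A, exists B, C B /\ isomorphic (fg_sub l) B.

Definition homogeneous A : Prop :=
  forall (l : seq A) (iota : fg_sub l -> A), is_emb iota ->
    exists al : A -> A, is_aut al /\ forall x, al (proj1_sig x) = iota x.

Definition has_age (C : structure L -> Prop) F : Prop :=
  (forall l : seq F, exists B, C B /\ isomorphic (fg_sub l) B) /\
  (forall B, C B -> exists l : seq F, isomorphic B (fg_sub l)).

Definition fraisse_limit (C : structure L -> Prop) F : Prop :=
  countable_struct F /\ homogeneous F /\ has_age C F.

Definition universal_within (C : structure L -> Prop) V T (u : V -> T) : Prop :=
  forall A, cbar C A -> forall h : A -> T, is_hom h ->
    exists iota : A -> V, is_emb iota /\ forall x, h x = u (iota x).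

Definition hom_homogeneous V T (u : V -> T) : Prop :=
  forall (l : seq V) (iota : fg_sub l -> V), is_emb iota ->
    (forall x, u (iota x) = u (proj1_sig x)) ->
    exists al : V -> V, is_aut al /\ (forall x, u (al x) = u x) /\
      forall x, al (proj1_sig x) = iota x.

End Structures.

From mathcomp Require Import all_boot.
From Stdlib Require Import ProofIrrelevance ClassicalEpsilon FunctionalExtensionality.
From Stdlib Require List.
Set Implicit Arguments.
Unset Strict Implicit.
Unset Printing Implicit Defensive.

(* The proof has two ingredients.
   (1) Every automorphism beta of T lifts along u to an automorphism of V
       (lift_aut).  This is a back-and-forth over an enumeration of the countable
       structure V: a partial lift of beta on a finitely generated substructure
       extends to a full self-embedding of V over beta (universality of u gives an
       embedding over beta o u, homogeneity of u corrects it), and applying this to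
       beta^-1 and inverting pushes any point into the image.  The union of the
       resulting chain is an automorphism (chain_union_iso).
   (2) Classify an n-tuple x of V by a pair (i, j): the substructure generated by x
       embeds into F, hence x is the image of an orbit representative r_i of
       Aut(F) under a partial embedding sg (tuple_pulls_back_to_rep); the
       substructure generated by r_i lies in one fixed finite list m (F is locally
       finite), and j is the Aut(T)-orbit of u o sg on m.  Tuples of the same class
       are conjugate under Aut(V) by (1) and homogeneity of u
       (conjugate_of_conjugate_image), so finitely many classes give finitely many
       orbits (finitely_many_orbits_of_classes). *)

Section PartialEmbeddings.
Variable L : signature.
Implicit Types A B : structure L.

Lemma emb_hom A B (e : A -> B) : is_emb e -> is_hom e.
Proof. by move=> [_ [Hf Hr]]; split => // r a; rewrite Hr. Qed.

Lemma hom_comp A B (D : structure L) (e : A -> B) (g : B -> D) :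
  is_hom e -> is_hom g -> is_hom (fun x => g (e x)).
Proof.
move=> [Ef Er] [Gf Gr]; split; first by move=> f a; rewrite Ef Gf.
by move=> r a /Er /Gr.
Qed.

Lemma emb_comp A B (D : structure L) (e : A -> B) (g : B -> D) :
  is_emb e -> is_emb g -> is_emb (fun x => g (e x)).
Proof.
move=> [Ei [Ef Er]] [Gi [Gf Gr]]; split; first by move=> x y /Gi /Ei.
split; first by move=> f a; rewrite Ef Gf.
by move=> r a; rewrite Er Gr.
Qed.

Lemma id_emb A : is_emb (fun x : A => x).
Proof. by split=> //; split. Qed.

Lemma id_aut A : is_aut (fun x : A => x).
Proof. by split=> [|y]; [exact: id_emb|exists y]. Qed.

Lemma aut_comp A (h g : A -> A) : is_aut h -> is_aut g -> is_aut (fun x => g (h x)).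
Proof.
move=> [Eh Sh] [Eg Sg]; split; first exact: emb_comp.
by move=> y; have [z <-] := Sg y; have [x <-] := Sh z; exists x.
Qed.

Lemma aut_inv A (h : A -> A) :
  is_aut h -> exists h', is_aut h' /\ (forall x, h' (h x) = x) /\ (forall x, h (h' x) = x).
Proof.
move=> [[Hi [Hf Hr]] Hs]; have [h' Hh'] := choice _ Hs.
have hK : forall x, h' (h x) = x by move=> x; apply: Hi; rewrite Hh'.
have h'K : forall k (a : 'I_k -> A), (fun i => h (h' (a i))) = a.
  by move=> k a; apply: functional_extensionality => i; rewrite Hh'.
exists h'; split=> //; split; last by move=> y; exists (h y).
split; first by move=> x y E; rewrite -(Hh' x) -(Hh' y) E.
split=> [f a|r a]; last by rewrite (Hr r (fun i => h' (a i))) h'K.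
by apply: Hi; rewrite Hh' Hf h'K.
Qed.

Definition pemb A B (D : A -> Prop) (e : A -> B) : Prop :=
  (forall x y, D x -> D y -> e x = e y -> x = y) /\
  (forall f (a : 'I_(farity f) -> A), (forall i, D (a i)) ->
     e (fint a) = fint (fun i => e (a i))) /\
  (forall r (a : 'I_(rarity r) -> A), (forall i, D (a i)) ->
     (rint a <-> rint (fun i => e (a i)))).

Lemma emb_pemb A B (D : A -> Prop) (e : A -> B) : is_emb e -> pemb D e.
Proof.
move=> [Hi [Hf Hr]]; split; first by move=> x y _ _; apply: Hi.
by split=> [f a _|r a _]; [apply: Hf|apply: Hr].
Qed.

Lemma pemb_comp A B (D : structure L) (DA : A -> Prop) (DB : B -> Prop)
    (e : A -> B) (g : B -> D) :
  pemb DA e -> pemb DB g -> (forall x, DA x -> DB (e x)) -> pemb DA (fun x => g (e x)).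
Proof.
move=> [Ei [Ef Er]] [Gi [Gf Gr]] H; split.
  by move=> x y Hx Hy /(Gi _ _ (H _ Hx) (H _ Hy)); apply: Ei.
split=> [f a Ha|r a Ha]; first by rewrite Ef // Gf // => i; apply: H.
by rewrite (Er r a Ha); apply: (Gr r (fun i => e (a i))) => i; apply: H.
Qed.

Lemma pemb_restrict A B (l : seq A) (e : A -> B) :
  pemb (gen l) e -> is_emb (fun s : fg_sub l => e (proj1_sig s)).
Proof.
move=> [Hi [Hf Hr]]; split.
  move=> [x Hx] [y Hy] /= /Hi E; have Exy := E Hx Hy; subst y.
  by rewrite (proof_irrelevance _ Hx Hy).
split=> [f a|r a] /=; first by rewrite Hf // => i; exact: proj2_sig (a i).
by apply: Hr => i; exact: proj2_sig (a i).
Qed.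

Lemma pemb_extend A B (l : seq A) (j : fg_sub l -> B) (b0 : B) :
  is_emb j -> exists k : A -> B, pemb (gen l) k /\
    forall z (H : gen l z), k z = j (exist (gen l) z H).
Proof.
move=> [Hi [Hf Hr]].
pose k z := if excluded_middle_informative (gen l z) is left H
            then j (exist (gen l) z H) else b0.
have Hk : forall z (H : gen l z), k z = j (exist (gen l) z H).
  move=> z H; rewrite /k; case: excluded_middle_informative => // H'.
  by rewrite (proof_irrelevance _ H H').
have ka : forall n (a : 'I_n -> A) (Ha : forall i, gen l (a i)),
    (fun i => k (a i)) = (fun i => j (exist (gen l) (a i) (Ha i))).
  by move=> n a Ha; apply: functional_extensionality => i; rewrite Hk.
exists k; split => //; split.
  by move=> x y Hx Hy; rewrite (Hk _ Hx) (Hk _ Hy) => /Hi [].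
split=> [f a Ha|r a Ha]; last by rewrite (ka _ _ Ha) -Hr.
rewrite (Hk _ (gen_closed Ha)) (ka _ _ Ha) -Hf; congr j.
Qed.

Lemma gen_in A (l : seq A) y : List.In y l -> gen l y.
Proof. by move=> Hy S _ Hl; apply: Hl. Qed.

Lemma gen_sub A (l l' : seq A) :
  (forall y, List.In y l -> gen l' y) -> forall x, gen l x -> gen l' x.
Proof. by move=> H x Hx; apply: (Hx (gen l')); [exact: gen_closed|]. Qed.

Lemma gen_image A B (l : seq A) (e : A -> B) : pemb (gen l) e ->
  (forall z, gen l z -> gen (List.map e l) (e z)) /\
  (forall w, gen (List.map e l) w -> exists z, gen l z /\ e z = w).
Proof.
move=> [_ [Hf _]]; split.
  move=> z Hz; suff [] : gen l z /\ gen (List.map e l) (e z) by [].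
  apply: (Hz (fun z => gen l z /\ gen (List.map e l) (e z))) => [f a Ha|y Hy].
    2: by split; apply: gen_in => //; apply: List.in_map.
  split; first by apply: gen_closed => i; case: (Ha i).
  by rewrite Hf => [|i]; [apply: gen_closed => i|]; case: (Ha i).
move=> w Hw; apply: (Hw (fun w => exists z, gen l z /\ e z = w)).
  move=> f a Ha; have [b Hb] := choice _ Ha.
  exists (fint b); split; first by apply: gen_closed => i; case: (Hb i).
  rewrite Hf => [|i]; last by case: (Hb i).
  by congr fint; apply: functional_extensionality => i; case: (Hb i).
by move=> y /List.in_map_iff [x [<- Hx]]; exists x; split=> //; apply: gen_in.
Qed.

Lemma pemb_gen_inverse A B (a0 : A) (l : seq A) (e : A -> B) : pemb (gen l) e ->
  exists t : B -> A, pemb (gen (List.map e l)) t /\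
    (forall z, gen l z -> t (e z) = z) /\
    (forall w, gen (List.map e l) w -> gen l (t w) /\ e (t w) = w).
Proof.
move=> He; have [img_fwd img_back] := gen_image He; have [Ei [Ef Er]] := He.
pose t w := epsilon (inhabits a0) (fun z => gen l z /\ e z = w).
have tK : forall w, gen (List.map e l) w -> gen l (t w) /\ e (t w) = w.
  by move=> w /img_back Hw; apply: (epsilon_spec _ (fun z => gen l z /\ e z = w)).
have eK : forall z, gen l z -> t (e z) = z.
  by move=> z Hz; have [Dt Et] := tK _ (img_fwd _ Hz); apply: Ei.
have etK : forall k (a : 'I_k -> B), (forall i, gen (List.map e l) (a i)) ->
    (fun i => e (t (a i))) = a.
  by move=> k a Ha; apply: functional_extensionality => i; case: (tK _ (Ha i)).
exists t; split => //; split.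
  by move=> w w' Hw Hw' E; rewrite -(proj2 (tK _ Hw)) -(proj2 (tK _ Hw')) E.
split=> [f a Ha|r a Ha]; last by rewrite (Er r (fun i => t (a i))) ?etK // => i; case: (tK _ (Ha i)).
have Hta : forall i, gen l (t (a i)) by move=> i; case: (tK _ (Ha i)).
apply: Ei; [by case: (tK _ (gen_closed Ha))|exact: gen_closed Hta|].
by rewrite Ef // etK //; case: (tK _ (gen_closed Ha)).
Qed.

End PartialEmbeddings.

(* A countable set of tasks can all be met along one chain, provided each single
   task can be met by extending any given state. Task [x] is met at stage [(g x).+1]. *)
Lemma countable_chain (S X : Type) (R : S -> S -> Prop) (meets : S -> X -> Prop)
    (g : X -> nat) (s0 : S) :
  injective g -> (forall s, R s s) -> (forall s1 s2 s3, R s1 s2 -> R s2 s3 -> R s1 s3) ->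
  (forall s x, exists s', R s s' /\ meets s' x) ->
  exists st : nat -> S, (forall m N, m <= N -> R (st m) (st N)) /\
    (forall x, meets (st (g x).+1) x).
Proof.
move=> g_inj Rrefl Rtrans step.
have next : forall sn : S * nat, exists s',
    R sn.1 s' /\ forall x, g x = sn.2 -> meets s' x.
  move=> [s n]; case: (classic (exists x, g x = n)) => [[x <-]|nox].
    have [s' [Rs' Ms']] := step s x.
    by exists s'; split=> // y /g_inj ->.
  by exists s; split=> // x Hx; case: nox; exists x.
have [nxt Hnxt] := choice _ next.
pose st := nat_rect (fun _ => S) s0 (fun n s => nxt (s, n)).
exists st; split; last by move=> x; apply: (proj2 (Hnxt (st (g x), g x))).
move=> m N /subnKC <-; elim: (N - m) => [|k IH]; first by rewrite addn0.
by rewrite addnS; apply: Rtrans IH (proj1 (Hnxt (st (m + k), m + k))).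
Qed.

Section ChainUnion.
Variables (L : signature) (A B : structure L).
Variables (D : nat -> A -> Prop) (E : nat -> A -> B) (g : A -> nat).
Hypothesis E_pemb : forall n, pemb (D n) (E n).
Hypothesis E_mono : forall m N y, m <= N -> D m y -> D N y /\ E N y = E m y.
Hypothesis D_cover : forall v, D (g v) v.
Hypothesis E_onto : forall w, exists n z, D n z /\ E n z = w.

Let union v := E (g v) v.

Lemma union_stage v N : g v <= N -> D N v /\ union v = E N v.
Proof. by move=> HN; have [HD HE] := E_mono HN (D_cover v); rewrite /union HE. Qed.

Lemma union_common_stage k (a : 'I_k -> A) N0 :
  exists2 N, N0 <= N & forall i, D N (a i) /\ union (a i) = E N (a i).
Proof.
exists (maxn N0 (\max_i g (a i))); first exact: leq_maxl.
move=> i; apply: union_stage.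
exact: leq_trans (@leq_bigmax _ (fun j => g (a j)) i) (leq_maxr N0 _).
Qed.

Lemma chain_union_iso : is_iso union.
Proof.
have ext_fun : forall N k (a : 'I_k -> A), (forall i, union (a i) = E N (a i)) ->
    (fun i => union (a i)) = (fun i => E N (a i)).
  by move=> N k a H; apply: functional_extensionality.
split; first split.
- move=> x y Exy.
  have [Dx Ux] := union_stage (leq_maxl (g x) (g y)).
  have [Dy Uy] := union_stage (leq_maxr (g x) (g y)).
  by apply: (proj1 (E_pemb _)) Dx Dy _; rewrite -Ux -Uy.
- split=> [f a|r a].
  + have [N HfN Ha] := union_common_stage a (g (fint a)).
    have [_ ->] := union_stage HfN; rewrite (ext_fun N) => [|i]; last by case: (Ha i).
    by apply: (proj1 (proj2 (E_pemb N))) => i; case: (Ha i).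
  + have [N _ Ha] := union_common_stage a 0.
    rewrite (ext_fun N) => [|i]; last by case: (Ha i).
    by apply: (proj2 (proj2 (E_pemb N))) => i; case: (Ha i).
- move=> w; have [n [z [Dz <-]]] := E_onto w; exists z.
  have [_ ->] := union_stage (leq_maxr n (g z)).
  by have [_ ->] := E_mono (leq_maxl n (g z)) Dz.
Qed.

End ChainUnion.

Section OrbitCounting.
Variable L : signature.

Definition finitely_many_orbits (A : structure L) (m : nat) : Prop :=
  exists (N : nat) (reps : 'I_N -> 'I_m -> A),
    forall x : 'I_m -> A, exists (i : 'I_N) (al : A -> A),
      is_aut al /\ forall j, al (reps i j) = x j.

(* There is exactly one orbit on the empty tuple. *)
Lemma oligomorphic_all_arities (A : structure L) :
  oligomorphic A -> forall m, finitely_many_orbits A m.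
Proof.
move=> Aol [|m]; last exact: Aol.
have reps : 'I_1 -> 'I_0 -> A by move=> _ [j]; rewrite ltn0.
exists 1, reps => x; exists ord0, id; split; first exact: id_aut.
by case=> j Hj; exfalso; rewrite ltn0 in Hj.
Qed.

Lemma finitely_many_orbits_of_classes (A : structure L) n (K : finType)
    (P : K -> ('I_n -> A) -> Prop) :
  (forall x, exists k, P k x) ->
  (forall k x x', P k x -> P k x' -> exists al, is_aut al /\ forall j, al (x j) = x' j) ->
  finitely_many_orbits A n.
Proof.
move=> classify same_class.
case: (classic (inhabited ('I_n -> A))) => [inh|noA]; last first.
  have reps : 'I_0 -> 'I_n -> A by move=> [j]; rewrite ltn0.
  by exists 0, reps => x; case: noA.
exists #|K|, (fun i => epsilon inh (P (enum_val i))) => x.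
have [k Pkx] := classify x.
have Pk_rep : P k (epsilon inh (P k)) := epsilon_spec inh (P k) (ex_intro _ x Pkx).
by exists (enum_rank k); rewrite enum_rankK; exact: same_class Pk_rep Pkx.
Qed.

End OrbitCounting.

Section LiftingAutomorphisms.
Variables (L : signature) (C : structure L -> Prop) (V T : structure L) (u : V -> T).
Hypothesis V_cbar : cbar C V.
Hypothesis u_hom : is_hom u.
Hypothesis u_univ : universal_within C u.
Hypothesis u_homog : hom_homogeneous u.

Lemma hom_homogeneous_pemb (l : seq V) (e : V -> V) :
  pemb (gen l) e -> (forall z, gen l z -> u (e z) = u z) ->
  exists eta, is_aut eta /\ (forall x, u (eta x) = u x) /\ forall z, gen l z -> eta z = e z.
Proof.
move=> He Heu.
have [eta [Heta [Hetau Hext]]] :=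
  u_homog (pemb_restrict He) (fun s => Heu _ (proj2_sig s)).
by exists eta; split=> //; split=> // z Hz; exact: (Hext (exist _ z Hz)).
Qed.

Definition partial_lift (beta : T -> T) (l : seq V) (e : V -> V) : Prop :=
  pemb (gen l) e /\ forall z, gen l z -> u (e z) = beta (u z).

Definition lift_extends (le le' : seq V * (V -> V)) : Prop :=
  forall y, gen le.1 y -> gen le'.1 y /\ le'.2 y = le.2 y.

(* Forth: a partial lift extends to an embedding of all of [V] over [beta]; first map
   [V] over [beta o u] by universality, then correct by homogeneity of [u]. *)
Lemma extend_partial_lift (v0 : V) beta l e : is_hom beta -> partial_lift beta l e ->
  exists e', is_emb e' /\ (forall z, u (e' z) = beta (u z)) /\ forall z, gen l z -> e' z = e z.
Proof.
move=> Hb [He Heu].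
have [io [Hio Hiou]] := u_univ V_cbar (hom_comp u_hom Hb).
have Hio_l : pemb (gen l) io := emb_pemb _ Hio.
have [t [Ht [tK Hti]]] := pemb_gen_inverse v0 Hio_l.
have Hf : pemb (gen (List.map io l)) (fun w => e (t w)).
  by apply: (pemb_comp Ht He) => w /Hti [].
have Hfu : forall w, gen (List.map io l) w -> u (e (t w)) = u w.
  by move=> w /Hti [Dt Et]; rewrite Heu // Hiou Et.
have [eta [Heta [Hetau Hetae]]] := hom_homogeneous_pemb Hf Hfu.
exists (fun z => eta (io z)); split; first by apply: emb_comp Hio _; case: Heta.
split=> [z|z Hz]; first by rewrite Hetau Hiou.
by rewrite Hetae ?tK //; apply: (proj1 (gen_image Hio_l)).
Qed.

(* Back: a partial lift extends to one whose image contains a prescribed point [w];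
   invert it, go forth over [beta^-1], and invert again. *)
Lemma partial_lift_back beta beta' l e (w : V) :
  is_hom beta' -> (forall x, beta' (beta x) = x) -> (forall x, beta (beta' x) = x) ->
  partial_lift beta l e ->
  exists l' e', partial_lift beta l' e' /\ lift_extends (l, e) (l', e') /\
    exists z, gen l' z /\ e' z = w.
Proof.
move=> Hb' b'K bK [He Heu].
have [t [Ht [tK Hti]]] := pemb_gen_inverse w He.
have Htu : partial_lift beta' (List.map e l) t.
  by split=> // y /Hti [Dt Et]; rewrite -{2}Et Heu // b'K.
have [f' [Hf' [Hf'u Hf't]]] := extend_partial_lift w Hb' Htu.
have f'e : forall y, gen l y -> f' (e y) = y.
  by move=> y Hy; rewrite Hf't ?tK //; exact: (proj1 (gen_image He)).
pose l2 := w :: List.map e l.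
have Hf'_l2 : pemb (gen l2) f' := emb_pemb _ Hf'.
have [nu [Hnu [nuK Hnui]]] := pemb_gen_inverse w Hf'_l2.
have l2_w : gen l2 w by apply: gen_in; left.
exists (List.map f' l2), nu; split; [|split].
- by split=> // z /Hnui [_ Ez]; rewrite -{2}Ez Hf'u bK.
- move=> y Hy /=.
  have Hey : gen l2 (e y).
    apply: gen_sub (proj1 (gen_image He) _ Hy) => y' Hy'; apply: gen_in; by right.
  have := proj1 (gen_image Hf'_l2) _ Hey; rewrite f'e // => Hy'.
  by split=> //; rewrite -{1}(f'e _ Hy) nuK.
- by exists (f' w); split; [apply: gen_in; left|exact: nuK l2_w].
Qed.

Lemma partial_lift_step beta beta' l e (v w : V) :
  is_hom beta -> is_hom beta' -> (forall x, beta' (beta x) = x) ->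
  (forall x, beta (beta' x) = x) -> partial_lift beta l e ->
  exists l' e', partial_lift beta l' e' /\ lift_extends (l, e) (l', e') /\
    gen l' v /\ exists z, gen l' z /\ e' z = w.
Proof.
move=> Hb Hb' b'K bK Hle.
have [e1 [He1 [He1u He1e]]] := extend_partial_lift v Hb Hle.
have l_vl : forall y, gen l y -> gen (v :: l) y.
  by apply: gen_sub => y Hy; apply: gen_in; right.
have Hvl : partial_lift beta (v :: l) e1 by split=> [|z _]; [exact: emb_pemb|].
have [l' [e' [Hl'e' [Hext Hw]]]] := partial_lift_back w Hb' b'K bK Hvl.
exists l', e'; split=> //; split; last by split=> //; apply: (proj1 (Hext v _)); apply: gen_in; left.
move=> y Hy; have [Hy' E'] := Hext y (l_vl _ Hy).
by split=> //; rewrite E' /= He1e.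
Qed.

(* Every automorphism of [T] lifts along [u] to an automorphism of [V]: a
   back-and-forth along an enumeration of the countable structure [V]. *)
Lemma lift_aut beta : is_aut beta ->
  exists alpha, is_aut alpha /\ forall x, u (alpha x) = beta (u x).
Proof.
move=> Hb; have [beta' [Hb' [b'K bK]]] := aut_inv Hb.
have [Hbh Hbh'] := (emb_hom (proj1 Hb), emb_hom (proj1 Hb')).
have [g g_inj] := V_cbar.1.
have [io [Hio Hiou]] := u_univ V_cbar (hom_comp u_hom Hbh).
pose S := {le : seq V * (V -> V) | partial_lift beta le.1 le.2}.
pose s0 : S := exist _ ([::], io) (conj (emb_pemb _ Hio) (fun z _ => esym (Hiou z))).
pose meets (s : S) v :=
  gen (sval s).1 v /\ exists z, gen (sval s).1 z /\ (sval s).2 z = v.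
pose R (s s' : S) := lift_extends (sval s) (sval s').
have R_refl : forall s, R s s by move=> s y.
have R_trans : forall s1 s2 s3, R s1 s2 -> R s2 s3 -> R s1 s3.
  by move=> s1 s2 s3 H12 H23 y /H12 [/H23 [Hy3 E3] E2]; split=> //; rewrite E3.
have step : forall s v, exists s', R s s' /\ meets s' v.
  move=> [[l e] Hle] v.
  have [l' [e' [Hle' [Hext Hv]]]] := partial_lift_step v v Hbh Hbh' b'K bK Hle.
  by exists (exist _ (l', e') Hle').
have [st [st_mono st_meets]] := countable_chain s0 g_inj R_refl R_trans step.
have Hiso := @chain_union_iso _ _ _ (fun n => gen (sval (st n)).1) (fun n => (sval (st n)).2)
  (fun v => (g v).+1) (fun n => proj1 (proj2_sig (st n))) (fun m N y HmN => st_mono m N HmN y)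
  (fun v => proj1 (st_meets v)).
exists (fun v => (sval (st (g v).+1)).2 v); split.
  apply: Hiso => w; exists (g w).+1; exact: (proj2 (st_meets w)).
by move=> x; apply: (proj2 (proj2_sig (st (g x).+1))); exact: (proj1 (st_meets x)).
Qed.

(* Two partial embeddings into [V] of a finitely generated substructure [gen l] of
   any structure [F], which become conjugate under [Aut T] after composing with [u],
   are conjugate under [Aut V]: lift the automorphism of [T], then correct the
   lifted copy by homogeneity of [u]. *)
Lemma conjugate_of_conjugate_image (F : structure L) (f0 : F) (l : seq F)
    (sg sg' : F -> V) beta :
  pemb (gen l) sg -> pemb (gen l) sg' -> is_aut beta ->
  (forall w, gen l w -> beta (u (sg w)) = u (sg' w)) ->
  exists alpha, is_aut alpha /\ forall w, gen l w -> alpha (sg w) = sg' w.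
Proof.
move=> Hsg Hsg' Hb Hbu.
have [al [Hal Halu]] := lift_aut Hb.
have [t [Ht [tK Hti]]] := pemb_gen_inverse f0 Hsg'.
have Hio : pemb (gen (List.map sg' l)) (fun z => al (sg (t z))).
  apply: (pemb_comp (DB := fun _ => True)) (emb_pemb _ (proj1 Hal)) _ => //.
  by apply: (pemb_comp Ht Hsg) => z /Hti [].
have Hiou : forall z, gen (List.map sg' l) z -> u (al (sg (t z))) = u z.
  by move=> z /Hti [Dt Et]; rewrite Halu Hbu // Et.
have [eta [Heta [_ Hetae]]] := hom_homogeneous_pemb Hio Hiou.
have [eta' [Heta' [eta'K _]]] := aut_inv Heta.
exists (fun v => eta' (al v)); split; first exact: aut_comp Hal Heta'.
move=> w Hw; have Ew : al (sg w) = eta (sg' w).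
  by rewrite Hetae ?tK //; exact: (proj1 (gen_image Hsg')).
by rewrite Ew eta'K.
Qed.

End LiftingAutomorphisms.

Section TupleTypes.
Variable L : signature.
Implicit Types A F : structure L.

Definition tseq A n (x : 'I_n -> A) : seq A := List.map x (enum 'I_n).

(* Membership in lists of generators, stated with [List.In] as in [gen]. *)
Lemma In_enum (X : finType) (k : X) : List.In k (enum X).
Proof.
have : k \in enum X by rewrite mem_enum.
by elim: (enum X) => //= a s IH; rewrite in_cons => /orP [/eqP ->|/IH]; [left|right].
Qed.

Lemma In_tseq A n (x : 'I_n -> A) k : List.In (x k) (tseq x).
Proof. exact: List.in_map (In_enum k). Qed.

Lemma In_tnth (X : Type) (s : seq X) y :
  List.In y s -> exists p : 'I_(size s), tnth (in_tuple s) p = y.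
Proof.
move=> Hy; suff [p Hp E] : exists2 p, p < size s & nth y s p = y.
  by exists (Ordinal Hp); rewrite (tnth_nth y).
by elim: s Hy => //= a s IH [->|/IH [p Hp E]]; [exists 0|exists p.+1].
Qed.

Lemma fg_sub_pemb_into_age_model (C : structure L -> Prop) A F (l : seq A) (a0 : A) :
  cbar C A -> has_age C F -> gen l a0 -> exists e : A -> F, pemb (gen l) e.
Proof.
move=> [_ Aage] [_ Fage] Ha0.
have [B [HB [h1 [Hh1 _]]]] := Aage l.
have [l' [h2 [Hh2 _]]] := Fage B HB.
pose kh (s : fg_sub l) : F := proj1_sig (h2 (h1 s)).
have Hkh : is_emb kh.
  exact: emb_comp (emb_comp Hh1 Hh2) (pemb_restrict (emb_pemb _ (id_emb F))).
have [k [Hk _]] := pemb_extend (kh (exist _ a0 Ha0)) Hkh.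
by exists k.
Qed.

Lemma tuple_pulls_back_to_rep A F n (x : 'I_n -> A) (k0 : 'I_n) N (rF : 'I_N -> 'I_n -> F) :
  (forall y : 'I_n -> F, exists (i : 'I_N) (al : F -> F),
     is_aut al /\ forall j, al (rF i j) = y j) ->
  (exists e : A -> F, pemb (gen (tseq x)) e) ->
  exists i (sg : F -> A), pemb (gen (tseq (rF i))) sg /\ forall j, sg (rF i j) = x j.
Proof.
move=> reps [ka Hka].
have [i [de [Hde Ede]]] := reps (fun j => ka (x j)).
have [di [Hdi [diK _]]] := aut_inv Hde.
have Hka' : pemb (gen (tseq x)) (fun z => di (ka z)).
  exact: (pemb_comp (DB := fun _ => True)) Hka (emb_pemb _ (proj1 Hdi)) (fun _ _ => I).
have kaxE : forall j, di (ka (x j)) = rF i j by move=> j; rewrite -Ede diK.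
have [sg [Hsg [sgK _]]] := pemb_gen_inverse (x k0) Hka'.
have Emap : List.map (fun z => di (ka z)) (tseq x) = tseq (rF i).
  by rewrite /tseq List.map_map; apply: List.map_ext.
exists i, sg; rewrite -Emap; split=> // j.
by rewrite -kaxE sgK //; apply: gen_in; exact: In_tseq.
Qed.

End TupleTypes.

Unset Implicit Arguments.
Theorem proposition3p6 (L : signature) (U C : structure L -> Prop)
  (T V : structure L) (u : V -> T) :
  is_age U ->
  fraisse_class C ->
  (forall A, C A -> U A) ->
  (exists F, fraisse_limit C F /\ locally_finite F /\ oligomorphic F) ->
  cbar U T ->
  cbar C V ->
  is_hom u ->
  universal_within C u ->
  hom_homogeneous u ->
  oligomorphic T ->
  oligomorphic V.
Proof.
move=> _ _ _ [F [[_ [_ F_age]] [F_lf F_olig]]] _ V_cbar u_hom u_univ u_homog T_olig n n_gt0.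
pose k0 : 'I_n := Ordinal n_gt0.
have [NF [rF rF_reps]] := F_olig n n_gt0.
(* one finite list [m] contains the substructures generated by all representatives *)
have [m Hm] := F_lf (List.map (fun p => rF p.1 p.2) (enum {: 'I_NF * 'I_n})).
have rep_in_m : forall i w, gen (tseq (rF i)) w -> List.In w m.
  move=> i w Hw; apply: Hm; apply: gen_sub Hw => _ /List.in_map_iff [k [<- _]].
  by apply: gen_in; exact: (List.in_map (fun p => rF p.1 p.2) _ (i, k) (In_enum _)).
have [NT [tT tT_reps]] := oligomorphic_all_arities T_olig (size m).
(* class (i, j): [x] is the image of [rF i] under [sg], and [u o sg] on [m] lies in
   the [j]-th orbit of [Aut T] *)
pose P (k : 'I_NF * 'I_NT) (x : 'I_n -> V) := exists sg : F -> V,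
  pemb (gen (tseq (rF k.1))) sg /\ (forall j, sg (rF k.1 j) = x j) /\
  exists beta, is_aut beta /\ forall p, beta (tT k.2 p) = u (sg (tnth (in_tuple m) p)).
apply: (finitely_many_orbits_of_classes (P := P)).
- move=> x.
  have [e He] := fg_sub_pemb_into_age_model V_cbar F_age (gen_in (In_tseq x k0)).
  have [i [sg [Hsg sgx]]] := tuple_pulls_back_to_rep k0 rF_reps (ex_intro _ e He).
  have [j [beta [Hb Hbt]]] := tT_reps (fun p => u (sg (tnth (in_tuple m) p))).
  by exists (i, j), sg; split=> //; split=> //; exists beta.
- move=> [i j] x x' [sg [Hsg [sgx [b [Hb Hbt]]]]] [sg' [Hsg' [sgx' [b' [Hb' Hb't]]]]].
  have [bi [Hbi [biK _]]] := aut_inv Hb.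
  have Hconj : forall w, gen (tseq (rF i)) w -> b' (bi (u (sg w))) = u (sg' w).
    move=> w Hw; have [p <-] := In_tnth (rep_in_m i w Hw).
    by rewrite -(Hbt p) biK Hb't.
  have [al [Hal Halsg]] := conjugate_of_conjugate_image V_cbar u_hom u_univ u_homog
    (rF i k0) Hsg Hsg' (aut_comp Hbi Hb') Hconj.
  exists al; split=> // q; rewrite -sgx -sgx' Halsg //.
  by apply: gen_in; exact: In_tseq.
Qed.
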